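(* Let $p$ be any prime and let $F_{at}:\mathbb{F}_p^2\to\mathbb{F}_p^2$ be the map $F_{at}(x,y)=(x^2y,\;x^2y+xy^2)$, where $\mathbb{F}_p=\mathbb{Z}/p\mathbb{Z}$. Then the $p$-th iterate $F_{at}^{\circ p}$ sends every point of $\mathbb{F}_p^2$ to $(0,0)$.
   Context: $F_{at}$ is the reduction modulo $p$ of the integer polynomial map $(x,y)\mapsto(x^2y,\,x^2y+xy^2)$ (called the ''additive trap''); $F_{at}^{\circ p}$ denotes its $p$-fold composition with itself. *)

From mathcomp Require Import all_boot all_algebra.
Set Implicit Arguments. Unset Strict Implicit. Unset Printing Implicit Defensive.
Import GRing.Theory.
Local Open Scope ring_scope.

Definition F_at (p : nat) (v : 'F_p * 'F_p) : 'F_p * 'F_p :=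
  let: (x, y) := v in (x ^+ 2 * y, x ^+ 2 * y + x * y ^+ 2).

(* On the line y = c x the map acts by (x, c x) |-> (c x^3, (c + 1) c x^3): it
   stays on a line through the origin whose slope has grown by 1.  Starting from
   slope c, after n steps the slope is c + n; once it reaches 0 the point lies on
   the x-axis, which is sent to the origin, a fixed point.  In F_p the slope -c
   is the class of some n < p, so n + 1 <= p steps suffice; points with x = 0 are
   killed in one step. *)
From mathcomp Require Import all_boot all_algebra.
From mathcomp Require Import ring.
Local Open Scope ring_scope.
Import GRing.Theory.

Set Implicit Arguments.
Unset Strict Implicit.

Section AdditiveTrap.

Variable p : nat.

Local Notation F := (@F_at p).

Lemma F_at_line (x c : 'F_p) :
  F (x, x * c) = (x ^+ 3 * c, x ^+ 3 * c * (c + 1)).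
Proof. by rewrite /F_at; congr pair; ring. Qed.

Lemma F_at_axis (x : 'F_p) : F (x, 0) = (0, 0).
Proof. by rewrite /F_at; congr pair; ring. Qed.

Lemma F_at_0y (y : 'F_p) : F (0, y) = (0, 0).
Proof. by rewrite /F_at; congr pair; ring. Qed.

Lemma iter_F_at_00 (m : nat) : iter m F (0, 0) = (0, 0).
Proof. by elim: m => //= m ->; rewrite F_at_axis. Qed.

Lemma iter_F_at_absorb (k m : nat) (v : 'F_p * 'F_p) : (k <= m)%N ->
  iter k F v = (0, 0) -> iter m F v = (0, 0).
Proof. by move=> le_km vk0; rewrite -(subnK le_km) iterD vk0 iter_F_at_00. Qed.

Lemma iter_F_at_line (n : nat) (x c : 'F_p) : c + n%:R = 0 ->
  iter n.+1 F (x, x * c) = (0, 0).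
Proof.
elim: n x c => [|n IH] x c.
  by rewrite addr0 => ->; rewrite mulr0; exact: F_at_axis.
move=> slope_end; rewrite iterSr F_at_line; apply: IH.
by rewrite -[RHS]slope_end mulrS; ring.
Qed.

End AdditiveTrap.

Theorem mainTheorem1 (p : nat) (hp : prime p) (v : 'F_p * 'F_p) :
  iter p (@F_at p) v = (0, 0).
Proof.
have p_gt0 : (0 < p)%N by exact: prime_gt0.
case: v => x y.
have [-> | x_neq0] := eqVneq x 0.
  by apply: (@iter_F_at_absorb _ 1) => //; exact: F_at_0y.
set c := y / x.
have -> : y = x * c by rewrite /c mulrC divfK.
(* The representative of [- c] is below [pdiv p], which is [p] for prime [p]. *)
have lt_np : (nat_of_ord (- c) < p)%N.
  by have := ltn_ord (- c); rewrite [X in (_ < X)%N -> _]Fp_cast.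
apply: (iter_F_at_absorb lt_np); apply: iter_F_at_line.
by rewrite natr_Zp subrr.
Qed.
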